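(* Let $S\subset\mathbb{R}^2$ be a finite set in general position and let $a,b\in S$. If $ab$ is an exit edge of $S$ with two distinct witnesses $c,d\in S$, then in the dual arrangement $\mathcal{A}$ of $S^*$ the two unmarked triangular cells bounded by $a^*,b^*,c^*$ and by $a^*,b^*,d^*$ both have exit vertex $a^*\cap b^*$, i.e. they form an hourglass.
   Context: General position: no three points collinear. For distinct $a,b,c\in S$, $ab$ is an exit edge with witness $c$ if there is no $p\in S$ such that the line through $a$ and $p$ strictly separates $b$ from $c$, and no $p\in S$ such that the line through $b$ and $p$ strictly separates $a$ from $c$. Duality: $p=(p_x,p_y)\mapsto p^*: y=p_xx-p_y$, lines in the projective plane $\mathbb{P}^2$; $\mathcal{A}$ is the arrangement of $S^*=\{s^*:s\in S\}$. The marked cell is the cell containing the vertical point at infinity. Lines are oriented in the direction of increasing $x$; for an unmarked triangular cell, the exit vertex is the unique vertex at which one incident side is directed into it and the other out of it. An hourglass is a pair of distinct unmarked triangular cells with the same exit vertex. *)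

From Stdlib Require Import Reals List.
Open Scope R_scope.

Definition point := (R * R)%type.

(* Orientation determinant of (p, q, r): zero iff collinear; its sign tells
   on which side of the (oriented) line pq the point r lies. *)
Definition orient (p q r : point) : R :=
  (fst q - fst p) * (snd r - snd p) - (snd q - snd p) * (fst r - fst p).

Definition general_position (S : list point) : Prop :=
  forall p q r, In p S -> In q S -> In r S ->
    p <> q -> q <> r -> p <> r -> orient p q r <> 0.

Definition strictly_separates (u p x y : point) : Prop :=
  u <> p /\ orient u p x * orient u p y < 0.

Definition exit_edge_witness (S : list point) (a b c : point) : Prop :=
  In a S /\ In b S /\ In c S /\ a <> b /\ b <> c /\ a <> c /\
  ~ (exists p, In p S /\ strictly_separates a p b c) /\
  ~ (exists p, In p S /\ strictly_separates b p a c).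

(* Homogeneous coordinates [X : Y : W] of P^2; the affine point (x, y)
   is [x : y : 1]; a point of P^2 is a nonzero vector up to nonzero scaling.
   All predicates below on vectors are invariant under nonzero scaling. *)
Record vec3 := V3 { vX : R; vY : R; vW : R }.

Definition vzero : vec3 := V3 0 0 0.
Definition vadd (u v : vec3) : vec3 := V3 (vX u + vX v) (vY u + vY v) (vW u + vW v).
Definition vscale (k : R) (v : vec3) : vec3 := V3 (k * vX v) (k * vY v) (k * vW v).

(* The dual line p^dual : y = p_x x - p_y, in homogeneous form
   p_x X - Y - p_y W = 0.  [dual_form p v] is the defining linear form. *)
Definition dual_form (p : point) (v : vec3) : R :=
  fst p * vX v - vY v - snd p * vW v.

Definition off_lines (S : list point) (v : vec3) : Prop :=
  v <> vzero /\ forall s, In s S -> dual_form s v <> 0.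

(* A "region" is a set of points of P^2, given as a scaling-invariant
   predicate on vectors. *)
Definition region := vec3 -> Prop.

(* The cell of the arrangement A of S^dual containing the point [v0]
   (v0 off all lines): the points [v] off all lines which are not separated
   from [v0] by any line of S^dual, i.e. whose sign vector w.r.t. the forms
   (dual_form s)_{s in S} agrees with that of v0 up to a global sign. *)
Definition cell_of (S : list point) (v0 : vec3) : region :=
  fun v => off_lines S v /\
    exists e, (e = 1 \/ e = -1) /\
      forall s, In s S -> 0 < e * dual_form s v * dual_form s v0.

Definition is_cell (S : list point) (C : region) : Prop :=
  exists v0, off_lines S v0 /\ forall v, C v <-> cell_of S v0 v.

(* The marked cell: the cell containing the vertical point at infinity [0:1:0]. *)
Definition marked (C : region) : Prop := C (V3 0 1 0).

(* [w] is a point in the relative interior of the side (edge) of cell C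
   lying on the line s^dual: w is on s^dual, on no other line of S^dual, and no other
   line of S^dual separates it from the cell C. *)
Definition edge_point (S : list point) (C : region) (s : point) (w : vec3) : Prop :=
  w <> vzero /\ dual_form s w = 0 /\
  (forall t, In t S -> t <> s -> dual_form t w <> 0) /\
  exists v0, C v0 /\ exists e, (e = 1 \/ e = -1) /\
    forall t, In t S -> t <> s -> 0 < e * dual_form t w * dual_form t v0.

Definition is_side (S : list point) (C : region) (s : point) : Prop :=
  In s S /\ exists w, edge_point S C s w.

Definition triangular_cell (S : list point) (C : region) (a b c : point) : Prop :=
  is_cell S C /\ a <> b /\ b <> c /\ a <> c /\
  forall s, is_side S C s <-> (s = a \/ s = b \/ s = c).

(* Orientation of lines by increasing x: moving from [v] in direction t, the
   affine x-coordinate X/W increases, i.e. d/dh (X/W)(v + h t) at h = 0 has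
   numerator W*tX - X*tW > 0 (this expression also gives the orientation
   through the points at infinity, by continuity on the projective line). *)
Definition x_increasing (v t : vec3) : Prop := 0 < vW v * vX t - vX v * vW t.
Definition x_decreasing (v t : vec3) : Prop := vW v * vX t - vX v * vW t < 0.

Definition side_leaves (S : list point) (C : region) (s : point) (v t : vec3) : Prop :=
  dual_form s t = 0 /\
  exists h0, 0 < h0 /\
    forall h, 0 < h < h0 -> edge_point S C s (vadd v (vscale h t)).

Definition side_out (S : list point) (C : region) (s : point) (v : vec3) : Prop :=
  exists t, side_leaves S C s v t /\ x_increasing v t.
Definition side_in (S : list point) (C : region) (s : point) (v : vec3) : Prop :=
  exists t, side_leaves S C s v t /\ x_decreasing v t.

Definition mixed_vertex (S : list point) (C : region) (a b : point) : Prop :=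
  exists v, v <> vzero /\ dual_form a v = 0 /\ dual_form b v = 0 /\
    ((side_in S C a v /\ side_out S C b v) \/
     (side_out S C a v /\ side_in S C b v)).

(* C is a triangular cell whose exit vertex is a^dual ∩ b^dual: the vertex
   a^dual ∩ b^dual is the unique vertex of the triangle with one incident side
   directed in and the other out. *)
Definition exit_vertex_is (S : list point) (C : region) (a b : point) : Prop :=
  exists c, triangular_cell S C a b c /\
    mixed_vertex S C a b /\ ~ mixed_vertex S C a c /\ ~ mixed_vertex S C b c.

Definition hourglass (S : list point) (C1 C2 : region) : Prop :=
  (exists v, ~ (C1 v <-> C2 v)) /\ ~ marked C1 /\ ~ marked C2 /\
  exists a b, In a S /\ In b S /\ a <> b /\
    exit_vertex_is S C1 a b /\ exit_vertex_is S C2 a b.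

From Stdlib Require Import Reals List Lra Psatz Classical.
Open Scope R_scope.

(* The value of the form of s* at a vector v is [ev s v]; the cell of a point is determined by its
   sign vector (ev s v)_{s in S} up to a global sign.  Let ab be an exit edge with witness w.  The
   exit-edge condition says that for every further point p of S the lines ap and bp do not
   separate ([no_separator]).  Consider the points v on the same side of a* and b* and on opposite
   sides of a* and w* ([pattern]).  By Cramer's rule orient(a,b,w)·ev p v is a sum of three terms,
   and under [pattern] and [no_separator] these have the same sign ([pattern_terms]); so no further
   line enters the [pattern] region, which is therefore a triangular cell with sides a*, b*, w*.
   The direction of a side at a vertex s* ∩ r* is read off from the signs of the cell
   ([side_direction]): the two sides there are one in, one out iff the cell lies on the same side of
   s* and r* ([vertex_sides_sign]).  Under [pattern] this singles out a* ∩ b* as the exit vertex.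
   Conversely, with a second witness w', every triangular cell bounded by a*, b*, w* has the
   [pattern]: otherwise a point of w'* on the cell's side of a*, b*, w* exists, and walking to it
   from the cell crosses a side other than a*, b*, w* ([crossing_side]).  Finally the triangles of
   the witnesses c and d lie on different sides of d* relative to a*, so they are distinct cells. *)

Local Notation ev := dual_form (only parsing).

Definition coef (s : point) : vec3 := V3 (fst s) (-1) (- snd s).

Definition cross (u v : vec3) : vec3 :=
  V3 (vY u * vW v - vW u * vY v) (vW u * vX v - vX u * vW v) (vX u * vY v - vY u * vX v).

Definition meet (s r : point) : vec3 := cross (coef s) (coef r).

Definition sqnorm (v : vec3) : R := vX v * vX v + vY v * vY v + vW v * vW v.

(* A direction along s*, away from the vertex s* ∩ r*, towards the side of r* containing x. *)
Definition along (s r : point) (x : vec3) : vec3 :=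
  vscale (- ev r x) (cross (coef s) (meet s r)).

Definition x_rate (v t : vec3) : R := vW v * vX t - vX v * vW t.

Lemma orient_swap p q r : orient p q r = - orient q p r.
Proof. unfold orient; ring. Qed.

(* Cramer's rule: the forms of three non-concurrent dual lines span all linear forms.
   This is the identity behind every sign computation below. *)
Lemma cramer a b c s v :
  orient a b c * ev s v = ev a v * orient b c s + ev b v * orient c a s + ev c v * orient a b s.
Proof. destruct a, b, c, s, v; unfold orient, dual_form; simpl; ring. Qed.

Lemma ev_add s u v : ev s (vadd u v) = ev s u + ev s v.
Proof. destruct s, u, v; unfold dual_form; simpl; ring. Qed.

Lemma ev_scale s k v : ev s (vscale k v) = k * ev s v.
Proof. destruct s, v; unfold dual_form; simpl; ring. Qed.

Lemma ev_meet s r p : ev p (meet s r) = - orient s r p.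
Proof. destruct s, r, p; unfold orient, dual_form; simpl; ring. Qed.

Lemma ev_meet_l s r : ev s (meet s r) = 0.
Proof. rewrite ev_meet; unfold orient; ring. Qed.

Lemma ev_meet_r s r : ev r (meet s r) = 0.
Proof. rewrite ev_meet; unfold orient; ring. Qed.

Lemma nonzero_of_ev s v : ev s v <> 0 -> v <> vzero.
Proof. intros H E; subst; apply H; destruct s; unfold dual_form; simpl; ring. Qed.

Lemma zero_of_ev v : ev (0, 0) v = 0 -> ev (1, 0) v = 0 -> ev (0, 1) v = 0 -> v = vzero.
Proof.
  destruct v as [X Y W]; unfold dual_form; simpl; intros H0 H1 H2.
  unfold vzero; f_equal; lra.
Qed.

Lemma concurrent_zero a b c v :
  orient a b c <> 0 -> ev a v = 0 -> ev b v = 0 -> ev c v = 0 -> v = vzero.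
Proof.
  intros Ho Ha Hb Hc.
  assert (Hall : forall s, ev s v = 0).
  { intro s. apply (Rmult_eq_reg_l (orient a b c)); auto.
    rewrite cramer, Ha, Hb, Hc; ring. }
  apply zero_of_ev; apply Hall.
Qed.

Lemma meet_param s r v : s <> r -> ev s v = 0 -> ev r v = 0 ->
  exists k, v = vscale k (meet s r).
Proof.
  destruct s as [sx sy], r as [rx ry], v as [X Y W]; unfold dual_form; simpl.
  intros Hne Hs Hr.
  destruct (Req_dec rx sx) as [E|E].
  - subst rx. assert (ry - sy <> 0) by (intro; apply Hne; f_equal; lra).
    assert (W = 0) by (apply (Rmult_eq_reg_l (ry - sy)); lra). subst W.
    assert (Y = sx * X) by lra. subst Y.
    exists (X / (ry - sy)). unfold vscale, meet, cross, coef; simpl. f_equal; field; lra.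
  - assert (rx - sx <> 0) by lra.
    assert (Y = sx * X - sy * W) by lra. subst Y.
    assert (X = W * (ry - sy) / (rx - sx)).
    { apply (Rmult_eq_reg_l (rx - sx)); auto. field_simplify; lra. }
    subst X. exists (W / (rx - sx)). unfold vscale, meet, cross, coef; simpl. f_equal; field; auto.
Qed.

Lemma meet_sqnorm_pos s r : s <> r -> 0 < sqnorm (meet s r).
Proof.
  destruct s as [sx sy], r as [rx ry]; unfold sqnorm, meet, cross, coef; simpl; intros Hne.
  pose proof (Rle_0_sqr (- sy * rx - sx * - ry)) as HY.
  pose proof (Rle_0_sqr (-1 * - ry - - sy * -1)) as HX.
  pose proof (Rle_0_sqr (sx * -1 - -1 * rx)) as HW.
  unfold Rsqr in *.
  destruct (Req_dec rx sx); [destruct (Req_dec ry sy)|].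
  - subst; contradiction.
  - assert (0 < (ry - sy) * (ry - sy)) by (apply Rsqr_pos_lt; lra). nra.
  - assert (0 < (rx - sx) * (rx - sx)) by (apply Rsqr_pos_lt; lra). nra.
Qed.

Lemma ev_along_l s r x : ev s (along s r x) = 0.
Proof. destruct s, r, x; unfold along, meet, cross, coef, dual_form; simpl; ring. Qed.

Lemma ev_along_r s r x : ev r (along s r x) = ev r x * sqnorm (meet s r).
Proof. destruct s, r, x; unfold along, meet, cross, coef, sqnorm, dual_form; simpl; ring. Qed.

Lemma x_rate_meet s r t : x_rate (meet s r) t = ev r t - ev s t.
Proof. destruct s, r, t; unfold x_rate, meet, cross, coef, dual_form; simpl; ring. Qed.

Lemma x_rate_scale k v t : x_rate (vscale k v) t = k * x_rate v t.
Proof. destruct v, t; unfold x_rate; simpl; ring. Qed.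

Lemma pos_of_prod A B : 0 < A * B -> 0 < B -> 0 < A.
Proof. intros H HB. destruct (Rlt_or_le 0 A); nra. Qed.

Lemma neg_of_prod A B : A * B < 0 -> 0 < B -> A < 0.
Proof. intros H HB. destruct (Rlt_or_le A 0); nra. Qed.

Lemma prod_pos_of_nz A B : 0 <= A * B -> A <> 0 -> B <> 0 -> 0 < A * B.
Proof.
  intros [H|E] HA HB; auto.
  symmetry in E; apply Rmult_integral in E; destruct E; contradiction.
Qed.

Lemma unit_sign_pair e A A' B B' : (e = 1 \/ e = -1) ->
  0 < e * A * A' -> 0 < e * B * B' -> 0 < (A * B) * (A' * B').
Proof. intros [-> | ->] HA HB; nra. Qed.

Lemma three_same_sign T1 T2 T3 : 0 < T1 * T2 -> 0 < T1 * T3 ->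
  0 < T1 * (T1 + T2 + T3) /\ 0 < T2 * (T1 + T2 + T3) /\ 0 < T3 * (T1 + T2 + T3).
Proof.
  intros H12 H13.
  assert (0 < T1 * T1) by (apply Rsqr_pos_lt; intro Z; rewrite Z in H12; lra).
  assert (0 < T2 * T3) by (apply (pos_of_prod _ (T1 * T1)); nra).
  nra.
Qed.

Lemma small_step A B : 0 < A ->
  exists h1, 0 < h1 /\ forall h, 0 < h < h1 -> 0 < A + h * B.
Proof.
  intros HA. pose proof (Rabs_pos B). pose proof (Rle_abs (- B)). rewrite Rabs_Ropp in *.
  exists (A / (Rabs B + 1)). split; [apply Rdiv_lt_0_compat; lra|].
  intros h [Hh Hh1].
  assert (h * (Rabs B + 1) < A).
  { apply (Rmult_lt_compat_r (Rabs B + 1)) in Hh1; [|lra].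
    replace (A / (Rabs B + 1) * (Rabs B + 1)) with A in Hh1 by (field; lra). exact Hh1. }
  nra.
Qed.

Lemma small_step_below A B h0 : A <> 0 -> 0 < h0 ->
  exists h, 0 < h < h0 /\ 0 < (A + h * B) * A.
Proof.
  intros HA H0.
  destruct (small_step (A * A) (A * B)) as [h1 [H1 Hstep]]; [apply Rsqr_pos_lt; auto|].
  exists (Rmin h0 h1 / 2).
  assert (0 < Rmin h0 h1) by (apply Rmin_pos; auto).
  pose proof (Rmin_l h0 h1). pose proof (Rmin_r h0 h1).
  split; [lra|].
  replace ((A + Rmin h0 h1 / 2 * B) * A) with (A * A + Rmin h0 h1 / 2 * (A * B)) by ring.
  apply Hstep; lra.
Qed.

Lemma perturb (l : list point) (P : point -> Prop) (x p u : vec3) :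
  (forall t, In t l -> P t -> 0 < ev t p * ev t x) ->
  exists h0, 0 < h0 /\ forall h, 0 < h < h0 ->
    forall t, In t l -> P t -> 0 < ev t (vadd p (vscale h u)) * ev t x.
Proof.
  induction l as [|t0 l IH]; intros Hpos.
  - exists 1; split; [lra|]. intros h _ t [].
  - destruct IH as [h0 [H0 Hl]]; [intros t Ht; apply Hpos; right; auto|].
    destruct (classic (P t0)) as [P0|P0].
    + destruct (small_step (ev t0 p * ev t0 x) (ev t0 u * ev t0 x)) as [h1 [H1 Hstep]].
      { apply Hpos; [left|]; auto. }
      exists (Rmin h0 h1). split; [apply Rmin_pos; auto|].
      pose proof (Rmin_l h0 h1). pose proof (Rmin_r h0 h1).
      intros h Hh t [<-|Ht] Pt.
      * rewrite ev_add, ev_scale.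
        replace ((ev t0 p + h * ev t0 u) * ev t0 x)
          with (ev t0 p * ev t0 x + h * (ev t0 u * ev t0 x)) by ring.
        apply Hstep; lra.
      * apply Hl; auto; lra.
    + exists h0. split; auto. intros h Hh t [<-|Ht] Pt; [contradiction|auto].
Qed.

Lemma list_argmin (l : list point) (P : point -> Prop) (g : point -> R) :
  (exists s, In s l /\ P s) ->
  exists s, In s l /\ P s /\ forall s', In s' l -> P s' -> g s <= g s'.
Proof.
  induction l as [|x l IH]; intros [s0 [Hs0 Ps0]]; [destruct Hs0|].
  destruct (classic (exists s, In s l /\ P s)) as [E|NE].
  - destruct (IH E) as [m [Hm [Pm Hmin]]].
    destruct (classic (P x /\ g x <= g m)) as [[Px Hx]|N].
    + exists x; split; [left; auto|split; auto].
      intros s' [<-|Hs'] Ps'; [lra|]. specialize (Hmin s' Hs' Ps'); lra.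
    + exists m; split; [right; auto|split; auto].
      intros s' [<-|Hs'] Ps'; auto.
      apply Rnot_lt_le; intro Hlt; apply N; split; auto; lra.
  - destruct Hs0 as [<-|Hs0]; [|exfalso; apply NE; eauto].
    exists x; split; [left; auto|split; auto].
    intros s' [<-|Hs'] Ps'; [lra|exfalso; apply NE; eauto].
Qed.

Lemma cell_self S x : off_lines S x -> cell_of S x x.
Proof.
  intros [xn Hx]. split; [split; auto|]. exists 1; split; [left; auto|].
  intros s Hs. specialize (Hx s Hs). assert (0 < ev s x * ev s x) by (apply Rsqr_pos_lt; auto). lra.
Qed.

Lemma cell_edge_point S x s q : off_lines S x -> q <> vzero -> ev s q = 0 ->
  (forall t, In t S -> t <> s -> 0 < ev t q * ev t x) -> edge_point S (cell_of S x) s q.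
Proof.
  intros Xo qn Hs Hpos. split; [auto|split; [auto|split]].
  - intros t Ht nts Z. specialize (Hpos t Ht nts). rewrite Z in Hpos; lra.
  - exists x. split; [apply cell_self; auto|].
    exists 1. split; [left; auto|]. intros t Ht nts. specialize (Hpos t Ht nts); lra.
Qed.

Lemma edge_point_signs S C s q x : (forall v, C v <-> cell_of S x v) -> edge_point S C s q ->
  exists e, (e = 1 \/ e = -1) /\ forall t, In t S -> t <> s -> 0 < e * ev t q * ev t x.
Proof.
  intros E (_ & _ & _ & v0 & Cv0 & e & He & Hq).
  apply E in Cv0. destruct Cv0 as [[_ Hv0] [e0 [He0 Hx]]].
  exists (e * e0). split; [destruct He as [-> | ->]; destruct He0 as [-> | ->]; lra|].
  intros t Ht nts.
  apply (pos_of_prod _ (ev t v0 * ev t v0)).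
  - destruct He as [-> | ->]; destruct He0 as [-> | ->];
      pose proof (Hq t Ht nts); pose proof (Hx t Ht); nra.
  - apply Rsqr_pos_lt; apply (Hv0 t Ht).
Qed.

Lemma edge_point_ext S C C' s q : (forall v, C v <-> C' v) ->
  edge_point S C s q -> edge_point S C' s q.
Proof.
  intros E (qn & Hs & Hoff & v0 & Cv0 & Hrel). repeat split; auto.
  exists v0; split; [apply E|]; auto.
Qed.

Lemma side_leaves_ext S C C' s v t : (forall v, C v <-> C' v) ->
  side_leaves S C s v t -> side_leaves S C' s v t.
Proof.
  intros E [Ht [h0 [H0 Hed]]]. split; auto. exists h0; split; auto.
  intros h Hh. apply (edge_point_ext S C); auto.
Qed.

Lemma side_leaves_is_side S C s v t : In s S -> side_leaves S C s v t -> is_side S C s.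
Proof.
  intros Hs [_ [h0 [H0 Hed]]]. split; auto. exists (vadd v (vscale (h0 / 2) t)). apply Hed; lra.
Qed.

Lemma leave_along S x s r p : off_lines S x -> In r S -> s <> r ->
  ev s p = 0 -> ev r p = 0 -> (forall t, In t S -> t <> s -> t <> r -> 0 < ev t p * ev t x) ->
  side_leaves S (cell_of S x) s p (along s r x).
Proof.
  intros Xo Hr nsr Hsp Hrp Hothers.
  pose proof (meet_sqnorm_pos s r nsr) as HN.
  pose proof (proj2 Xo r Hr) as Hrx.
  assert (0 < ev r x * ev r x) by (apply Rsqr_pos_lt; auto).
  split; [apply ev_along_l|].
  destruct (perturb S (fun t => t <> s /\ t <> r) x p (along s r x)) as [h0 [H0 Hsmall]].
  { intros t Ht [nts ntr]; auto. }
  exists h0. split; auto. intros h Hh.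
  set (q := vadd p (vscale h (along s r x))).
  assert (Hq : forall t, In t S -> t <> s -> 0 < ev t q * ev t x).
  { intros t Ht nts. destruct (classic (t = r)) as [->|ntr]; [|apply Hsmall; auto].
    unfold q. rewrite ev_add, ev_scale, Hrp, ev_along_r.
    replace ((0 + h * (ev r x * sqnorm (meet s r))) * ev r x)
      with ((h * sqnorm (meet s r)) * (ev r x * ev r x)) by ring.
    apply Rmult_lt_0_compat; [apply Rmult_lt_0_compat; lra | auto]. }
  apply cell_edge_point; auto.
  - apply (nonzero_of_ev r). intro Z. specialize (Hq r Hr (not_eq_sym nsr)). rewrite Z in Hq; lra.
  - unfold q. rewrite ev_add, ev_scale, Hsp, ev_along_l; ring.
Qed.

Lemma crossing_ratio A B : A <> 0 -> A * B <= 0 ->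
  0 < A * (A - B) /\ 0 < A / (A - B) <= 1 /\ A / (A - B) * (A - B) = A.
Proof.
  intros HA HAB.
  assert (0 < A * A) by (apply Rsqr_pos_lt; auto).
  assert (HD : 0 < A * (A - B)) by nra.
  assert (Dn : A - B <> 0) by (intro Z; rewrite Z in HD; lra).
  assert (Hk : A / (A - B) * (A - B) = A) by (field; auto).
  split; [auto|split; [|auto]].
  set (k := A / (A - B)) in *.
  assert (0 < k * (A * (A - B))) by nra.
  assert (0 <= (1 - k) * (A * (A - B))) by nra.
  split; [apply (pos_of_prod _ (A * (A - B))); auto|].
  assert (0 <= 1 - k); [|lra].
  destruct (Rle_or_lt 0 (1 - k)); auto. nra.
Qed.

(* Walking from x towards y, stop at the first line t1* weakly separating them: the stopping
   point p is on t1* and weakly on x's side of every line. *)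
Lemma first_crossing S x y w0 : off_lines S x -> In w0 S -> ev w0 x * ev w0 y <= 0 ->
  exists t1 lam, In t1 S /\ ev t1 x * ev t1 y <= 0 /\ 0 < lam <= 1 /\
    let p := vadd (vscale (1 - lam) x) (vscale lam y) in
    ev t1 p = 0 /\ forall t, In t S -> 0 <= ev t p * ev t x.
Proof.
  intros [xn Hx] Hw0 Pw0.
  set (P := fun t => ev t x * ev t y <= 0).
  set (g := fun t => ev t x / (ev t x - ev t y)).
  destruct (list_argmin S P g) as [t1 [Ht1 [Pt1 Hmin]]]; [exists w0; split; auto|].
  destruct (crossing_ratio (ev t1 x) (ev t1 y) (Hx t1 Ht1) Pt1) as [_ [Hlam Hk1]].
  change (0 < g t1 <= 1) in Hlam. change (g t1 * (ev t1 x - ev t1 y) = ev t1 x) in Hk1.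
  exists t1, (g t1). split; [auto|split; [auto|split; [auto|]]].
  set (lam := g t1) in *. cbv zeta.
  assert (Hp : forall t, ev t (vadd (vscale (1 - lam) x) (vscale lam y))
                         = ev t x - lam * (ev t x - ev t y)).
  { intro t. rewrite ev_add, !ev_scale; ring. }
  split.
  - rewrite Hp. lra.
  - intros t Ht. rewrite Hp. pose proof (Hx t Ht) as Htx.
    assert (0 < ev t x * ev t x) by (apply Rsqr_pos_lt; auto).
    destruct (classic (P t)) as [Pt|Pt].
    + destruct (crossing_ratio (ev t x) (ev t y) Htx Pt) as [HD [_ Hk]].
      specialize (Hmin t Ht Pt). unfold g in Hmin. fold lam in Hmin.
      set (k := ev t x / (ev t x - ev t y)) in *. nra.
    + unfold P in Pt.
      assert (0 <= (1 - lam) * (ev t x * ev t x)) by (apply Rmult_le_pos; lra).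
      assert (0 <= lam * (ev t x * ev t y)) by (apply Rmult_le_pos; lra).
      nra.
Qed.

Lemma crossing_side S x y s0 w0 : general_position S -> off_lines S x ->
  In s0 S -> 0 < ev s0 x * ev s0 y -> In w0 S -> ev w0 x * ev w0 y <= 0 ->
  exists t1 q, In t1 S /\ ev t1 x * ev t1 y <= 0 /\ edge_point S (cell_of S x) t1 q.
Proof.
  intros G Xo Hs0 Ps0 Hw0 Pw0.
  destruct (first_crossing S x y w0 Xo Hw0 Pw0) as (t1 & lam & Ht1 & Pt1 & Hlam & Hp1 & Hweak).
  set (p := vadd (vscale (1 - lam) x) (vscale lam y)) in *.
  assert (pn : p <> vzero).
  { apply (nonzero_of_ev s0). unfold p. rewrite ev_add, !ev_scale. intro Z.
    pose proof (proj2 Xo s0 Hs0). assert (0 < ev s0 x * ev s0 x) by (apply Rsqr_pos_lt; auto).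
    assert (((1 - lam) * ev s0 x + lam * ev s0 y) * ev s0 x = 0) by (rewrite Z; ring). nra. }
  assert (Hpos : forall t, In t S -> ev t p <> 0 -> 0 < ev t p * ev t x).
  { intros t Ht Hn. apply prod_pos_of_nz; auto. apply (proj2 Xo t Ht). }
  exists t1.
  destruct (classic (exists t2, In t2 S /\ t2 <> t1 /\ ev t2 p = 0)) as [[t2 [Ht2 [n21 Hp2]]]|Nt2].
  - assert (Hleave : side_leaves S (cell_of S x) t1 p (along t1 t2 x)).
    { apply leave_along; auto. intros t Ht n1 n2. apply Hpos; auto. intro Z. apply pn.
      apply (concurrent_zero t1 t2 t); auto. }
    destruct Hleave as [_ [h0 [H0 Hed]]].
    exists (vadd p (vscale (h0 / 2) (along t1 t2 x))). split; [auto|split; [auto|]]. apply Hed; lra.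
  - exists p. split; [auto|split; [auto|]]. apply cell_edge_point; auto.
    intros t Ht n1. apply Hpos; auto. intro Z. apply Nt2. exists t; auto.
Qed.

(* The exit-edge condition seen from another point p of S: the line ap does not separate b
   from w, and the line bp does not separate a from w. *)
Definition no_separator (a b w p : point) : Prop :=
  0 < orient a p b * orient a p w /\ 0 < orient b p a * orient b p w.

Lemma witness_no_separator S a b w p : general_position S -> exit_edge_witness S a b w ->
  In p S -> p <> a -> p <> b -> p <> w -> no_separator a b w p.
Proof.
  intros G (Ha & Hb & Hw & nab & nbw & naw & Na & Nb) Hp npa npb npw.
  split; apply prod_pos_of_nz; try (apply G; auto).
  - apply Rnot_lt_le. intro L. apply Na. exists p. repeat split; auto.
  - apply Rnot_lt_le. intro L. apply Nb. exists p. repeat split; auto.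
Qed.

Definition pattern (a b w : point) (v : vec3) : Prop :=
  0 < ev a v * ev b v /\ ev a v * ev w v < 0.

(* Key computation: at a [pattern] point the three terms of Cramer's expansion of
   orient(a,b,w)·ev p x have the same sign, so each fixes the sign of ev p x. *)
Lemma pattern_terms a b w p x : pattern a b w x -> no_separator a b w p ->
  0 < ev w x * orient a b p * orient a b w * ev p x /\
  0 < ev b x * orient w a p * orient w a b * ev p x /\
  0 < ev a x * orient b w p * orient b w a * ev p x.
Proof.
  intros [Pab Paw] [Na Nb].
  set (u1 := orient a p b) in *. set (u2 := orient a p w) in *. set (u4 := orient b p w) in *.
  assert (Nb' : u1 * u4 < 0).
  { replace (orient b p a) with (- u1) in Nb by (unfold u1, orient; ring). lra. }
  assert (0 < u1 * u1) by (apply Rsqr_pos_lt; intro Z; rewrite Z in Na; lra).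
  assert (Hu24 : 0 < - (u2 * u4)) by (apply (pos_of_prod _ (u1 * u1)); nra).
  set (T1 := ev a x * orient b w p). set (T2 := ev b x * orient w a p).
  set (T3 := ev w x * orient a b p).
  assert (E1 : orient b w p = - u4) by (unfold u4, orient; ring).
  assert (E2 : orient w a p = u2) by (unfold u2, orient; ring).
  assert (E3 : orient a b p = - u1) by (unfold u1, orient; ring).
  assert (H12 : 0 < T1 * T2) by (unfold T1, T2; rewrite E1, E2; nra).
  assert (H13 : 0 < T1 * T3) by (unfold T1, T3; rewrite E1, E3; nra).
  destruct (three_same_sign T1 T2 T3 H12 H13) as (K1 & K2 & K3).
  assert (Hsum : orient a b w * ev p x = T1 + T2 + T3)
    by (rewrite cramer; unfold T1, T2, T3, orient; ring).
  replace (orient w a b) with (orient a b w) by (unfold orient; ring).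
  replace (orient b w a) with (orient a b w) by (unfold orient; ring).
  rewrite !Rmult_assoc, Hsum. auto.
Qed.

Lemma pattern_off_line a b w p x : pattern a b w x -> no_separator a b w p -> ev p x <> 0.
Proof.
  intros HP HN Z. destruct (pattern_terms a b w p x HP HN) as [K _]. rewrite Z in K. lra.
Qed.

Lemma pattern_bw a b w x : pattern a b w x -> ev b x * ev w x < 0.
Proof.
  intros [Pab Paw]. apply (neg_of_prod _ (ev a x * ev b x)); auto.
  replace (ev b x * ev w x * (ev a x * ev b x))
    with ((ev a x * ev w x) * (ev b x * ev b x)) by ring.
  assert (0 < ev b x * ev b x) by (apply Rsqr_pos_lt; intro Z; rewrite Z in Pab; lra). nra.
Qed.

Lemma pattern_transfer a b w x q e : pattern a b w x -> (e = 1 \/ e = -1) ->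
  0 < e * ev a q * ev a x -> 0 < e * ev b q * ev b x -> 0 < e * ev w q * ev w x ->
  pattern a b w q.
Proof.
  intros [Pab Paw] He Ha Hb Hw.
  pose proof (unit_sign_pair e _ _ _ _ He Ha Hb) as Kab.
  pose proof (unit_sign_pair e _ _ _ _ He Ha Hw) as Kaw.
  split.
  - apply (pos_of_prod _ (ev a x * ev b x)); auto.
  - assert (0 < - (ev a q * ev w q)) by (apply (pos_of_prod _ (- (ev a x * ev w x))); lra). lra.
Qed.

(* The vertical point at infinity lies on the same side of all dual lines, so it is not in
   a [pattern] cell. *)
Lemma pattern_unmarked S C x a b w : (forall v, C v <-> cell_of S x v) ->
  In a S -> In w S -> pattern a b w x -> ~ marked C.
Proof.
  intros E Ha Hw [_ Paw] M. apply E in M. destruct M as [_ [e [He Hsign]]].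
  pose proof (unit_sign_pair e _ _ _ _ He (Hsign a Ha) (Hsign w Hw)) as K.
  unfold dual_form in K at 1 2; simpl in K. nra.
Qed.

Lemma witness_side a b w p x : pattern a b w x -> no_separator a b w p -> no_separator a b p w ->
  0 < ev a x * ev p x.
Proof.
  intros HP HN [_ Hp]. destruct (pattern_terms a b w p x HP HN) as (_ & _ & K).
  apply (pos_of_prod _ (orient b w a * orient b w p)); [|lra].
  replace (ev a x * ev p x * (orient b w a * orient b w p))
    with (ev a x * orient b w p * orient b w a * ev p x) by ring. exact K.
Qed.

Definition corner (S : list point) (x : vec3) (s r : point) (v : vec3) : Prop :=
  v <> vzero /\ ev s v = 0 /\ ev r v = 0 /\
  forall p, In p S -> p <> s -> p <> r -> 0 < ev p v * ev p x.

Lemma corner_sym S x s r v : corner S x s r v -> corner S x r s v.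
Proof. intros (vn & Hs & Hr & Hp). repeat split; auto. Qed.

(* A corner exists when the signs of the remaining forms at x are those predicted by the
   Cramer expansion with respect to s, r, m. *)
Lemma corner_exists S x s r m : general_position S -> off_lines S x ->
  In s S -> In r S -> In m S -> s <> r -> r <> m -> s <> m ->
  (forall p, In p S -> p <> s -> p <> r -> p <> m ->
     0 < ev m x * orient s r p * orient s r m * ev p x) ->
  exists v, corner S x s r v.
Proof.
  intros G [xn Hx] Hs Hr Hm nsr nrm nsm Hsign.
  assert (Z : orient s r m <> 0) by (apply G; auto).
  set (v := vscale (ev m x * ev m (meet s r)) (meet s r)).
  assert (Hsv : ev s v = 0) by (unfold v; rewrite ev_scale, ev_meet_l; ring).
  assert (Hrv : ev r v = 0) by (unfold v; rewrite ev_scale, ev_meet_r; ring).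
  assert (Hmv : ev m v = ev m x * (orient s r m * orient s r m))
    by (unfold v; rewrite ev_scale, ev_meet; ring).
  assert (HO : 0 < orient s r m * orient s r m) by (apply Rsqr_pos_lt; auto).
  assert (Pm : 0 < ev m v * ev m x).
  { rewrite Hmv. assert (0 < ev m x * ev m x) by (apply Rsqr_pos_lt; auto). nra. }
  exists v. split; [apply (nonzero_of_ev m); intro E; rewrite E in Pm; lra|].
  split; [auto|split; [auto|]].
  intros p Hp nps npr. destruct (classic (p = m)) as [->|npm]; auto.
  specialize (Hsign p Hp nps npr npm).
  pose proof (cramer s r m p v) as Cr. rewrite Hsv, Hrv, Hmv in Cr.
  apply (pos_of_prod _ (orient s r m * orient s r m)); auto.
  replace (ev p v * ev p x * (orient s r m * orient s r m))
    with ((orient s r m * ev p v) * (orient s r m * ev p x)) by ring.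
  rewrite Cr.
  replace ((0 * orient r m p + 0 * orient m s p +
            ev m x * (orient s r m * orient s r m) * orient s r p) * (orient s r m * ev p x))
    with ((orient s r m * orient s r m) * (ev m x * orient s r p * orient s r m * ev p x)) by ring.
  apply Rmult_lt_0_compat; auto.
Qed.

Lemma corner_side S x s r v : off_lines S x -> In r S -> s <> r -> corner S x s r v ->
  side_leaves S (cell_of S x) s v (along s r x).
Proof. intros Xo Hr nsr (vn & Hs & Hrv & Hp). apply leave_along; auto. Qed.

Lemma side_direction S C x s r m v t : general_position S -> (forall u, C u <-> cell_of S x u) ->
  In s S -> In r S -> In m S -> s <> r -> r <> m -> s <> m ->
  v <> vzero -> ev s v = 0 -> ev r v = 0 -> side_leaves S C s v t ->
  x_rate v t * ev r x * ev m x * orient s r m < 0.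
Proof.
  intros G E Hs Hr Hm nsr nrm nsm vn Hsv Hrv [Hst [h0 [H0 Hedge]]].
  destruct (meet_param s r v nsr Hsv Hrv) as [k Hk].
  assert (Z : orient s r m <> 0) by (apply G; auto).
  assert (kn : k <> 0) by (intro K; apply vn; rewrite Hk, K; unfold vscale, vzero; f_equal; ring).
  assert (Hmv : ev m v = - (k * orient s r m)) by (rewrite Hk, ev_scale, ev_meet; ring).
  assert (Hrate : x_rate v t = k * ev r t) by (rewrite Hk, x_rate_scale, x_rate_meet, Hst; ring).
  assert (Hmvn : ev m v <> 0).
  { rewrite Hmv. intro Q.
    apply (Rmult_integral_contrapositive k (orient s r m)); [split; auto|lra]. }
  destruct (small_step_below (ev m v) (ev m t) h0 Hmvn H0) as [h [Hh Hnear]].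
  destruct (edge_point_signs S C s _ x E (Hedge h Hh)) as [e [He Hsign]].
  pose proof (unit_sign_pair e _ _ _ _ He
                (Hsign r Hr (not_eq_sym nsr)) (Hsign m Hm (not_eq_sym nsm))) as K.
  rewrite !ev_add, !ev_scale, Hrv in K.
  set (M := ev m v + h * ev m t) in *.
  assert (K1 : 0 < ev r t * M * (ev r x * ev m x)).
  { apply (pos_of_prod _ h); [|lra]. replace (ev r t * M * (ev r x * ev m x) * h)
      with ((0 + h * ev r t) * M * (ev r x * ev m x)) by ring. exact K. }
  assert (K2 : 0 < ev r t * ev r x * ev m x * ev m v).
  { apply (pos_of_prod _ (M * M)); [|apply Rsqr_pos_lt; intro Q; rewrite Q in Hnear; lra].
    replace (ev r t * ev r x * ev m x * ev m v * (M * M))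
      with ((ev r t * M * (ev r x * ev m x)) * (M * ev m v)) by ring.
    apply Rmult_lt_0_compat; [auto|lra]. }
  rewrite Hrate. rewrite Hmv in K2.
  assert (0 < k * k) by (apply Rsqr_pos_lt; auto). nra.
Qed.

Lemma vertex_sides_sign S C x s r m v ts tr : general_position S ->
  (forall u, C u <-> cell_of S x u) ->
  In s S -> In r S -> In m S -> s <> r -> r <> m -> s <> m ->
  v <> vzero -> ev s v = 0 -> ev r v = 0 ->
  side_leaves S C s v ts -> side_leaves S C r v tr ->
  x_rate v ts * x_rate v tr * (ev s x * ev r x) < 0.
Proof.
  intros G E Hs Hr Hm nsr nrm nsm vn Hsv Hrv Ls Lr.
  pose proof (side_direction S C x s r m v ts G E Hs Hr Hm nsr nrm nsm vn Hsv Hrv Ls) as Ds.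
  pose proof (side_direction S C x r s m v tr G E Hr Hs Hm (not_eq_sym nsr) nsm nrm vn Hrv Hsv Lr)
    as Dr.
  rewrite orient_swap in Dr.
  set (Q := ev m x * orient s r m).
  assert (0 < Q * Q).
  { apply Rsqr_pos_lt. unfold Q. intro Z0. rewrite Rmult_assoc, Z0 in Ds. lra. }
  assert (0 < - (x_rate v ts * x_rate v tr * (ev s x * ev r x)) * (Q * Q)); [|nra].
  replace (- (x_rate v ts * x_rate v tr * (ev s x * ev r x)) * (Q * Q))
    with ((x_rate v ts * ev r x * ev m x * orient s r m) *
          (x_rate v tr * ev s x * ev m x * - orient s r m)) by (unfold Q; ring).
  nra.
Qed.

Lemma mixed_of_corner S C x s r m v : general_position S -> (forall u, C u <-> cell_of S x u) ->
  off_lines S x -> In s S -> In r S -> In m S -> s <> r -> r <> m -> s <> m ->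
  corner S x s r v -> 0 < ev s x * ev r x -> mixed_vertex S C s r.
Proof.
  intros G E Xo Hs Hr Hm nsr nrm nsm Hv Hsr.
  assert (E' : forall u, cell_of S x u <-> C u) by (intro u; split; apply E).
  pose proof (side_leaves_ext _ _ _ _ _ _ E' (corner_side S x s r v Xo Hr nsr Hv)) as Ls.
  pose proof (side_leaves_ext _ _ _ _ _ _ E'
                (corner_side S x r s v Xo Hs (not_eq_sym nsr) (corner_sym S x s r v Hv))) as Lr.
  destruct Hv as (vn & Hsv & Hrv & _).
  pose proof (vertex_sides_sign S C x s r m v _ _ G E Hs Hr Hm nsr nrm nsm vn Hsv Hrv Ls Lr) as K.
  exists v. split; [auto|split; [auto|split; [auto|]]].
  set (rs := x_rate v (along s r x)) in *. set (rr := x_rate v (along r s x)) in *.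
  assert (Krr : rs * rr < 0).
  { apply (neg_of_prod _ (ev s x * ev r x)); auto. }
  destruct (Rlt_or_le 0 rs) as [Hinc|Hdec].
  - right. split; [exists (along s r x) | exists (along r s x)]; split; auto.
    change (rr < 0). nra.
  - left. split; [exists (along s r x) | exists (along r s x)]; split; auto.
    + change (rs < 0). destruct Hdec as [|Z]; [lra|rewrite Z in Krr; lra].
    + change (0 < rr). nra.
Qed.

Lemma not_mixed S C x s r m : general_position S -> (forall u, C u <-> cell_of S x u) ->
  In s S -> In r S -> In m S -> s <> r -> r <> m -> s <> m ->
  ev s x * ev r x < 0 -> ~ mixed_vertex S C s r.
Proof.
  intros G E Hs Hr Hm nsr nrm nsm Hsr (v & vn & Hsv & Hrv & Hdir).
  assert (Same : forall ts tr, side_leaves S C s v ts -> side_leaves S C r v tr ->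
                   0 < x_rate v ts * x_rate v tr).
  { intros ts tr Ls Lr.
    pose proof (vertex_sides_sign S C x s r m v ts tr G E Hs Hr Hm nsr nrm nsm vn Hsv Hrv Ls Lr).
    apply (pos_of_prod _ (- (ev s x * ev r x))); lra. }
  destruct Hdir as [[[ts [Ls Xs]] [tr [Lr Xr]]] | [[ts [Ls Xs]] [tr [Lr Xr]]]];
    specialize (Same ts tr Ls Lr); unfold x_increasing, x_decreasing in *;
    unfold x_rate in Same; nra.
Qed.

(* An explicit [pattern] point off all lines, built from the three vertices of a*, b*, w*. *)
Lemma triangle_point S a b w : general_position S -> exit_edge_witness S a b w ->
  exists x, off_lines S x /\ pattern a b w x.
Proof.
  intros G Ex. pose proof Ex as (Ha & Hb & Hw & nab & nbw & naw & _).
  assert (Z : orient a b w <> 0) by (apply G; auto).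
  assert (0 < orient a b w * orient a b w) by (apply Rsqr_pos_lt; auto).
  set (x := vadd (vadd (meet b w) (meet w a)) (vscale (-1) (meet a b))).
  assert (Hx : forall s, ev s x = - orient b w s - orient w a s + orient a b s)
    by (intro s; unfold x; rewrite !ev_add, ev_scale, !ev_meet; ring).
  assert (Hax : ev a x = - orient a b w) by (rewrite Hx; unfold orient; ring).
  assert (Hbx : ev b x = - orient a b w) by (rewrite Hx; unfold orient; ring).
  assert (Hwx : ev w x = orient a b w) by (rewrite Hx; unfold orient; ring).
  assert (HP : pattern a b w x) by (split; rewrite ?Hax, ?Hbx, ?Hwx; nra).
  exists x. split; [|auto]. split.
  - apply (nonzero_of_ev a). rewrite Hax. lra.
  - intros s Hs.
    destruct (classic (s = a)) as [->|nsa]; [rewrite Hax; lra|].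
    destruct (classic (s = b)) as [->|nsb]; [rewrite Hbx; lra|].
    destruct (classic (s = w)) as [->|nsw]; [rewrite Hwx; lra|].
    apply (pattern_off_line a b w s x HP). apply (witness_no_separator S); auto.
Qed.

Section PatternCell.
Variables (S : list point) (a b w : point) (x : vec3).
Hypothesis G : general_position S.
Hypothesis Ex : exit_edge_witness S a b w.
Hypothesis Xo : off_lines S x.
Hypothesis HP : pattern a b w x.

Let Ha : In a S. Proof. apply Ex. Qed.
Let Hb : In b S. Proof. apply Ex. Qed.
Let Hw : In w S. Proof. apply Ex. Qed.
Let nab : a <> b. Proof. apply Ex. Qed.
Let nbw : b <> w. Proof. apply Ex. Qed.
Let naw : a <> w. Proof. apply Ex. Qed.

Let no_sep p : In p S -> p <> a -> p <> b -> p <> w -> no_separator a b w p.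
Proof. intros; apply (witness_no_separator S); auto. Qed.

Lemma pattern_corner_ab : exists v, corner S x a b v.
Proof.
  apply (corner_exists S x a b w); auto.
  intros p Hp npa npb npw. apply (pattern_terms a b w p x HP); auto.
Qed.

Lemma pattern_corner_wa : exists v, corner S x w a v.
Proof.
  apply (corner_exists S x w a b); auto.
  intros p Hp npw npa npb. apply (pattern_terms a b w p x HP); auto.
Qed.

Lemma pattern_sides s : is_side S (cell_of S x) s <-> s = a \/ s = b \/ s = w.
Proof.
  split.
  - intros [Hs [q Hq]]. apply NNPP. intro N.
    assert (nsa : s <> a) by tauto. assert (nsb : s <> b) by tauto. assert (nsw : s <> w) by tauto.
    destruct (edge_point_signs S (cell_of S x) s q x (fun v => iff_refl _) Hq) as [e [He Hsign]].
    assert (Pq : pattern a b w q).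
    { apply (pattern_transfer a b w x q e HP He); apply Hsign; auto. }
    destruct Hq as [_ [Hsq _]]. apply (pattern_off_line a b w s q Pq); auto.
  - intros [-> | [-> | ->]].
    + destruct pattern_corner_ab as [v Hv].
      apply (side_leaves_is_side _ _ _ v (along a b x)); auto. apply corner_side; auto.
    + destruct pattern_corner_ab as [v Hv].
      apply (side_leaves_is_side _ _ _ v (along b a x)); auto. apply corner_side; auto.
      apply corner_sym; auto.
    + destruct pattern_corner_wa as [v Hv].
      apply (side_leaves_is_side _ _ _ v (along w a x)); auto. apply corner_side; auto.
Qed.

Lemma pattern_triangular : triangular_cell S (cell_of S x) a b w.
Proof.
  split; [exists x; split; [auto | intro; tauto]|].
  split; [auto|split; [auto|split; [auto|apply pattern_sides]]].
Qed.

Lemma pattern_exit_vertex C : (forall v, C v <-> cell_of S x v) ->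
  triangular_cell S C a b w -> exit_vertex_is S C a b.
Proof.
  intros E Tri. exists w. split; [auto|split; [|split]].
  - destruct pattern_corner_ab as [v Hv]. apply (mixed_of_corner S C x a b w v); auto. apply HP.
  - apply (not_mixed S C x a w b); auto. apply HP.
  - apply (not_mixed S C x b w a); auto. apply (pattern_bw a); auto.
Qed.
End PatternCell.

Lemma witness_cell S a b w : general_position S -> exit_edge_witness S a b w ->
  exists x, off_lines S x /\ pattern a b w x /\ triangular_cell S (cell_of S x) a b w.
Proof.
  intros G Ex. destruct (triangle_point S a b w G Ex) as [x [Xo HP]].
  exists x. split; [auto|split; [auto|]]. apply pattern_triangular; auto.
Qed.

Lemma exists_pos_comb A B : 0 < A \/ 0 < B -> exists K, 0 < K /\ 0 < K * A + B.
Proof.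
  pose proof (Rabs_pos A). pose proof (Rabs_pos B).
  pose proof (Rle_abs (- A)). pose proof (Rle_abs (- B)). rewrite !Rabs_Ropp in *.
  intros [HA|HB].
  - exists ((Rabs B + 1) / A). split; [apply Rdiv_lt_0_compat; lra|].
    replace ((Rabs B + 1) / A * A) with (Rabs B + 1) by (field; lra). lra.
  - exists (B / (Rabs A + 1)). split; [apply Rdiv_lt_0_compat; lra|].
    assert (B / (Rabs A + 1) * Rabs A < B).
    { replace (B / (Rabs A + 1) * Rabs A) with (B * (Rabs A / (Rabs A + 1))) by (field; lra).
      assert (Rabs A / (Rabs A + 1) < 1) by (apply Rmult_lt_reg_r with (Rabs A + 1); [lra|];
        replace (Rabs A / (Rabs A + 1) * (Rabs A + 1)) with (Rabs A) by (field; lra); lra).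
      nra. }
    assert (0 < B / (Rabs A + 1)) by (apply Rdiv_lt_0_compat; lra). nra.
Qed.

Lemma off_pattern_cases a b w x : ev a x <> 0 -> ev b x <> 0 -> ev w x <> 0 -> ~ pattern a b w x ->
  0 < ev b x * ev w x \/ 0 < ev a x * ev w x.
Proof.
  intros na nb nw NP.
  assert (Nab : ev a x * ev b x <> 0) by (apply Rmult_integral_contrapositive; auto).
  assert (Naw : ev a x * ev w x <> 0) by (apply Rmult_integral_contrapositive; auto).
  assert (0 < ev a x * ev a x) by (apply Rsqr_pos_lt; auto).
  destruct (Rlt_or_le 0 (ev a x * ev w x)) as [Aw|Aw]; [right; auto|left].
  assert (Ab : ev a x * ev b x < 0).
  { destruct (Rlt_or_le 0 (ev a x * ev b x)); [exfalso; apply NP; split; lra|lra]. }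
  apply (pos_of_prod _ (ev a x * ev a x)); auto.
  replace (ev b x * ev w x * (ev a x * ev a x))
    with ((ev a x * ev b x) * (ev a x * ev w x)) by ring.
  nra.
Qed.

Lemma witness_line_point a b w w' x :
  ev a x <> 0 -> ev b x <> 0 -> ev w x <> 0 -> ~ pattern a b w x -> no_separator a b w w' ->
  exists y, ev w' y = 0 /\ 0 < ev a y * ev a x /\ 0 < ev b y * ev b x /\ 0 < ev w y * ev w x.
Proof.
  intros na nb nw NP [Na Nb].
  set (p1 := ev b (meet a w')). set (p2 := ev w (meet a w')).
  set (q1 := ev a (meet b w')). set (q2 := ev w (meet b w')).
  assert (HP : 0 < p1 * p2) by (unfold p1, p2; rewrite !ev_meet; lra).
  assert (HQ : 0 < q1 * q2) by (unfold q1, q2; rewrite !ev_meet; lra).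
  assert (0 < p1 * p1) by (apply Rsqr_pos_lt; intro Z; rewrite Z in HP; lra).
  assert (0 < q1 * q1) by (apply Rsqr_pos_lt; intro Z; rewrite Z in HQ; lra).
  set (xa := ev a x) in *. set (xb := ev b x) in *. set (xw := ev w x) in *.
  assert (0 < xa * xa) by (apply Rsqr_pos_lt; auto).
  assert (0 < xb * xb) by (apply Rsqr_pos_lt; auto).
  assert (Hcase : 0 < xb * xw * (p1 * p2) \/ 0 < xa * xw * (q1 * q2)).
  { destruct (off_pattern_cases a b w x na nb nw NP); [left|right]; apply Rmult_lt_0_compat; auto. }
  destruct (exists_pos_comb _ _ Hcase) as [K [HK Hcomb]].
  exists (vadd (vscale (K * xb * p1) (meet a w')) (vscale (xa * q1) (meet b w'))).
  rewrite !ev_add, !ev_scale. fold p1 p2 q1 q2. rewrite !ev_meet_l, !ev_meet_r.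
  split; [ring|split; [|split]].
  - replace ((K * xb * p1 * 0 + xa * q1 * q1) * xa) with ((xa * xa) * (q1 * q1)) by ring.
    apply Rmult_lt_0_compat; auto.
  - replace ((K * xb * p1 * p1 + xa * q1 * 0) * xb) with (K * ((xb * xb) * (p1 * p1))) by ring.
    apply Rmult_lt_0_compat; [auto|apply Rmult_lt_0_compat; auto].
  - replace ((K * xb * p1 * p2 + xa * q1 * q2) * xw)
      with (K * (xb * xw * (p1 * p2)) + xa * xw * (q1 * q2)) by ring. exact Hcomb.
Qed.

(* Uniqueness: given one more point w' of S, every triangular cell bounded by a*, b*, w*
   has the [pattern]; otherwise walking to the point of [witness_line_point] crosses a side
   other than a*, b*, w*. *)
Lemma triangular_cell_pattern S C a b w w' : general_position S -> exit_edge_witness S a b w ->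
  In w' S -> w' <> a -> w' <> b -> w' <> w -> triangular_cell S C a b w ->
  exists x, off_lines S x /\ (forall v, C v <-> cell_of S x v) /\ pattern a b w x.
Proof.
  intros G Ex Hw' n'a n'b n'w [[x [Xo E]] [_ [_ [_ Sides]]]].
  pose proof Ex as (Ha & Hb & Hw & _).
  exists x. split; [auto|split; [auto|]].
  apply NNPP. intro NP.
  destruct (witness_line_point a b w w' x) as (y & Hy' & Hya & Hyb & Hyw);
    try apply (proj2 Xo); auto.
  { apply (witness_no_separator S); auto. }
  destruct (crossing_side S x y a w') as (t1 & q & Ht1 & Ct1 & Hq); auto; try lra.
  { rewrite Hy'; lra. }
  assert (Side : is_side S C t1).
  { split; [auto|]. exists q.
    apply (edge_point_ext S (cell_of S x)); auto. intro v; split; apply E. }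
  destruct (proj1 (Sides t1) Side) as [-> | [-> | ->]]; lra.
Qed.

Lemma witness_triangle_exit S C a b w w' : general_position S -> exit_edge_witness S a b w ->
  In w' S -> w' <> a -> w' <> b -> w' <> w -> triangular_cell S C a b w -> exit_vertex_is S C a b.
Proof.
  intros G Ex Hw' n'a n'b n'w Tri.
  destruct (triangular_cell_pattern S C a b w w' G Ex Hw' n'a n'b n'w Tri) as (x & Xo & E & HP).
  apply (pattern_exit_vertex S a b w x); auto.
Qed.

(* The triangles of two distinct witnesses c, d are different cells: they lie on different
   sides of d* relative to a*. *)
Lemma witness_cells_differ S a b c d xc xd : general_position S ->
  exit_edge_witness S a b c -> exit_edge_witness S a b d -> c <> d ->
  pattern a b c xc -> pattern a b d xd -> ~ cell_of S xd xc.
Proof.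
  intros G Exc Exd ncd Pc Pd [_ [e [He Hsign]]].
  pose proof Exc as (Ha & Hb & Hc & nab & nbc & nac & _).
  pose proof Exd as (_ & _ & Hd & _ & nbd & nad & _).
  assert (Kc : 0 < ev a xc * ev d xc).
  { apply (witness_side a b c d xc Pc); apply (witness_no_separator S); auto. }
  pose proof (unit_sign_pair e _ _ _ _ He (Hsign a Ha) (Hsign d Hd)) as K.
  destruct Pd as [_ Kd]. nra.
Qed.

Theorem mainTheorem9 (S : list point) (a b c d : point) :
  NoDup S ->
  general_position S ->
  exit_edge_witness S a b c ->
  exit_edge_witness S a b d ->
  c <> d ->
  (forall w, (w = c \/ w = d) ->
     exists C, triangular_cell S C a b w /\ ~ marked C) /\
  (forall w C, (w = c \/ w = d) ->
     triangular_cell S C a b w -> ~ marked C -> exit_vertex_is S C a b) /\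
  (exists C1 C2, triangular_cell S C1 a b c /\ triangular_cell S C2 a b d /\
     hourglass S C1 C2).
Proof.
  intros _ G Exc Exd ncd.
  pose proof Exc as (Ha & Hb & Hc & nab & nbc & nac & _).
  pose proof Exd as (_ & _ & Hd & _ & nbd & nad & _).
  destruct (witness_cell S a b c G Exc) as (xc & Xc & Pc & Tc).
  destruct (witness_cell S a b d G Exd) as (xd & Xd & Pd & Td).
  pose proof (pattern_unmarked S _ xc a b c (fun v => iff_refl _) Ha Hc Pc) as Uc.
  pose proof (pattern_unmarked S _ xd a b d (fun v => iff_refl _) Ha Hd Pd) as Ud.
  split; [|split].
  - intros w [-> | ->]; [exists (cell_of S xc) | exists (cell_of S xd)]; auto.
  - intros w C [-> | ->] Tri _.
    + apply (witness_triangle_exit S C a b c d); auto.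
    + apply (witness_triangle_exit S C a b d c); auto.
  - exists (cell_of S xc), (cell_of S xd). split; [auto|split; [auto|]].
    split; [|split; [auto|split; [auto|]]].
    + exists xc. intros [Hin _]. apply (witness_cells_differ S a b c d xc xd); auto.
      apply Hin, cell_self; auto.
    + exists a, b. split; [auto|split; [auto|split; [auto|split]]].
      * apply (pattern_exit_vertex S a b c xc); auto; intro; tauto.
      * apply (pattern_exit_vertex S a b d xd); auto; intro; tauto.
Qed.
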